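(* For every graph $G$ and every integer $t\ge 1$, $f^-(t\cdot K_1+G)=f^-(G)$ and $f^+(t\cdot K_1+G)=f^+(G)$, where $t\cdot K_1$ denotes the edgeless graph on $t$ vertices.
   Context: All graphs are finite, simple, undirected and connected (except the edgeless graph $t\cdot K_1$ used in the join). $N[v]=N(v)\cup\{v\}$ is the closed neighbourhood. A chromatic colouring of $G$ is a proper vertex colouring $c:V(G)\to\{c_1,\dots,c_{\chi(G)}\}$. With respect to $c$, a vertex $v$ yields a rainbow neighbourhood if $N[v]$ contains a vertex of each colour $c_1,\dots,c_{\chi(G)}$; $r_\chi(G)$ is the number of such vertices, and $r^-_\chi(G)$, $r^+_\chi(G)$ are its minimum and maximum over all chromatic colourings of $G$. Fading: for a set $F\subseteq V(G)$ (a fade set), the vertices of $F$ receive a transparent colour $c^\circ$ not among $c_1,\dots,c_{\chi(G)}$; after fading, $v$ yields a rainbow neighbourhood iff for every $i$ some vertex of $N[v]\setminus F$ has colour $c_i$. The fading number $f^-(G)$ is the maximum $|F|$ over chromatic colourings $c$ attaining $r_\chi=r^-_\chi(G)$ and fade sets $F$ such that, after fading $F$, the number of vertices yielding rainbow neighbourhoods is still $r^-_\chi(G)$; $f^+(G)$ is defined analogously with $r^+_\chi(G)$. The join $G_1+G_2$ of vertex-disjoint graphs is $G_1\cup G_2$ together with all edges joining a vertex of $G_1$ to a vertex of $G_2$. *)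

From mathcomp Require Import all_boot.
Set Implicit Arguments. Unset Strict Implicit. Unset Printing Implicit Defensive.

Definition simple_connected_graph (T : finType) (e : rel T) : Prop :=
  [/\ symmetric e, irreflexive e, 0 < #|T| & forall x y, connect e x y].

Definition proper (T : finType) (e : rel T) k (c : {ffun T -> 'I_k}) : bool :=
  [forall x, forall y, e x y ==> (c x != c y)].

(* Chromatic number: least k admitting a proper k-colouring
   (k = #|T| always works for an irreflexive relation). *)
Definition chi (T : finType) (e : rel T) : nat :=
  find (fun k => [exists c : {ffun T -> 'I_k}, proper e c]) (iota 0 #|T|.+1).

Definition inN (T : finType) (e : rel T) (v u : T) : bool := (u == v) || e v u.

Definition rainbow (T : finType) (e : rel T) k (c : {ffun T -> 'I_k})
  (F : {set T}) (v : T) : bool :=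
  [forall i : 'I_k, exists u, [&& inN e v u, u \notin F & c u == i]].

Definition rcount (T : finType) (e : rel T) k (c : {ffun T -> 'I_k})
  (F : {set T}) : nat := #|[set v | rainbow e c F v]|.

Definition rnum (T : finType) (e : rel T) k (c : {ffun T -> 'I_k}) : nat :=
  rcount e c set0.

Definition rminus (T : finType) (e : rel T) : nat :=
  \big[minn/#|T|]_(c : {ffun T -> 'I_(chi e)} | proper e c) rnum e c.

Definition rplus (T : finType) (e : rel T) : nat :=
  \max_(c : {ffun T -> 'I_(chi e)} | proper e c) rnum e c.

Definition fminus (T : finType) (e : rel T) : nat :=
  \max_(c : {ffun T -> 'I_(chi e)} | proper e c && (rnum e c == rminus e))
    \max_(F : {set T} | rcount e c F == rminus e) #|F|.

Definition fplus (T : finType) (e : rel T) : nat :=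
  \max_(c : {ffun T -> 'I_(chi e)} | proper e c && (rnum e c == rplus e))
    \max_(F : {set T} | rcount e c F == rplus e) #|F|.

Definition join_rel (t : nat) {T : finType} (e : rel T) : rel ('I_t + T)%type :=
  fun x y => match x, y with
             | inl _, inl _ => false
             | inr a, inr b => e a b
             | _, _ => true
             end.
Arguments join_rel t {T} e _ _.

(* Every chromatic colouring of t.K_1 + G gives all of t.K_1 one colour a and colours G
   chromatically with the other chi(G) colours, so chi(t.K_1 + G) = chi(G) + 1.  Every
   chromatic colouring of G has a rainbow vertex (otherwise one colour class could be
   recoloured away), so each vertex of t.K_1 sees all colours and is rainbow: r_chi grows by
   exactly t, for corresponding colourings, and hence so do r^-_chi and r^+_chi.  After fading,
   a vertex of t.K_1 stays rainbow only if it is unfaded, being the only vertex of colour a in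
   its closed neighbourhood.  So a fade set of the join keeping r_chi(G) + t rainbow vertices
   misses t.K_1 and its trace on G keeps r_chi(G); conversely a fade set of G keeping r_chi(G)
   works for the join.  Maximal fade sets therefore have equal sizes. *)

From mathcomp Require Import all_boot zify.
(* Imported last, so that its [proper] shadows the one of fintype. *)
Set Implicit Arguments. Unset Strict Implicit. Unset Printing Implicit Defensive.

Section BigMin.

Variables (I : finType) (P : pred I) (f : I -> nat).

Lemma geq_bigmin_cond n i : P i -> \big[minn/n]_(i | P i) f i <= f i.
Proof.
move=> Pi; rewrite -big_filter.
have : i \in [seq j <- index_enum I | P j] by rewrite mem_filter Pi mem_index_enum.
elim: [seq j <- _ | _] => // j s IH; rewrite inE big_cons => /predU1P [<-|/IH].
  exact: geq_minl.
exact/leq_trans/geq_minr.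
Qed.

Lemma geq_bigmin_idx n : \big[minn/n]_(i | P i) f i <= n.
Proof. by elim/big_rec: _ => // i x _ le_xn; rewrite geq_min le_xn orbT. Qed.

Lemma leq_bigmin n m :
  m <= n -> (forall i, P i -> m <= f i) -> m <= \big[minn/n]_(i | P i) f i.
Proof. by move=> le_mn le_mf; elim/big_rec: _ => // i x Pi le_mx; rewrite leq_min le_mf. Qed.

End BigMin.

Section BigShift.

Variables (I J : finType) (P : pred I) (Q : pred J) (f : I -> nat) (g : J -> nat).

Lemma bigmax_leq_majorized :
  (forall j, Q j -> exists2 i, P i & g j <= f i) ->
  \max_(j | Q j) g j <= \max_(i | P i) f i.
Proof.
move=> maj; apply/bigmax_leqP => j /maj [i Pi le_gf].
exact: leq_trans le_gf (leq_bigmax_cond _ Pi).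
Qed.

Variable t : nat.
Hypothesis g_of_f : forall i, P i -> exists2 j, Q j & g j = f i + t.
Hypothesis f_of_g : forall j, Q j -> exists2 i, P i & g j = f i + t.

Lemma bigmin_shift n :
  \big[minn/n + t]_(j | Q j) g j = \big[minn/n]_(i | P i) f i + t.
Proof.
apply/anti_leq/andP; split.
  apply: (big_rec (fun x => _ <= x + t)) => [|i x Pi IH]; first exact: geq_bigmin_idx.
  have [j Qj gj] := g_of_f Pi.
  by rewrite addn_minl leq_min IH -gj geq_bigmin_cond.
apply: leq_bigmin => [|j /f_of_g [i Pi ->]]; first by rewrite leq_add2r geq_bigmin_idx.
by rewrite leq_add2r geq_bigmin_cond.
Qed.

Lemma bigmax_shift : (exists i, P i) ->
  \max_(j | Q j) g j = \max_(i | P i) f i + t.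
Proof.
move=> [i0 Pi0]; apply/anti_leq/andP; split.
  apply/bigmax_leqP => j /f_of_g [i Pi ->].
  by rewrite leq_add2r leq_bigmax_cond.
elim/big_rec: _ => [|i x Pi IH].
  have [j Qj gj] := g_of_f Pi0.
  by apply: leq_trans (leq_bigmax_cond _ Qj); rewrite gj leq_addl.
have [j Qj gj] := g_of_f Pi.
by rewrite addn_maxl geq_max IH -gj leq_bigmax_cond.
Qed.

End BigShift.

Lemma card_preim_sum (I T : finType) (A : {set _}) :
  #|A| = #|@inl I T @^-1: A| + #|@inr I T @^-1: A|.
Proof. by rewrite -!sum1_card big_sumType; congr (_ + _); apply: eq_bigl => ?; rewrite inE. Qed.

Lemma preimset_imset_inj (aT rT : finType) (f : aT -> rT) (A : {set aT}) :
  injective f -> f @^-1: (f @: A) = A.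
Proof. by move=> f_inj; apply/setP => x; rewrite inE mem_imset. Qed.

Lemma preimset_inl_imset_inr (I T : finType) (A : {set T}) :
  inl @^-1: (@inr I T @: A) = set0.
Proof. by apply/setP => i; rewrite !inE; apply/imsetP => -[]. Qed.

Section Colourings.

Variables (T : finType) (e : rel T).

Lemma properP k (c : {ffun T -> 'I_k}) :
  reflect (forall x y, e x y -> c x != c y) (proper e c).
Proof.
apply: (iffP forallP) => pc x; first by move=> y; apply/implyP; move: y; apply/forallP.
by apply/forallP => y; apply/implyP/pc.
Qed.

Lemma chi_exists : irreflexive e -> exists c : {ffun T -> 'I_(chi e)}, proper e c.
Proof.
move=> irr; set P := fun k => [exists c : {ffun T -> 'I_k}, proper e c].
have has_P : has P (iota 0 #|T|.+1).
  apply/hasP; exists #|T|; first by rewrite mem_iota leqnn.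
  apply/existsP; exists [ffun x => enum_rank x]; apply/properP => x y exy.
  by rewrite !ffunE (inj_eq enum_rank_inj); apply: contraTneq exy => ->; rewrite irr.
have := nth_find 0 has_P; rewrite nth_iota ?add0n; first by move/existsP.
by move: has_P; rewrite has_find size_iota.
Qed.

Lemma chi_leq k (c : {ffun T -> 'I_k}) : proper e c -> chi e <= k.
Proof.
move=> pc; have [le_Tk|lt_kT] := leqP #|T|.+1 k.
  by apply: leq_trans le_Tk; rewrite -[X in _ <= X](size_iota 0) find_size.
rewrite leqNgt; apply/negP => /(before_find 0); rewrite nth_iota // add0n.
by case/existsP; exists c.
Qed.

Lemma chi_leq_card m (c : T -> 'I_m) (A : {set 'I_m}) :
  0 < #|T| -> (forall x, c x \in A) -> (forall x y, e x y -> c x != c y) ->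
  chi e <= #|A|.
Proof.
move=> /card_gt0P [x0 _] cA pc.
apply: (@chi_leq _ [ffun x => enum_rank_in (cA x0) (c x)]); apply/properP => x y exy.
by rewrite !ffunE (can_in_eq (enum_rankK_in (cA x0))) ?cA ?pc.
Qed.

Lemma rcount_antimono k (c : {ffun T -> 'I_k}) (F1 F2 : {set T}) :
  F1 \subset F2 -> rcount e c F2 <= rcount e c F1.
Proof.
move=> sF12; apply/subset_leq_card/subsetP => v; rewrite !inE.
move=> /forallP rb2; apply/forallP => j; have /existsP [u /and3P [vu uF2 cu]] := rb2 j.
by apply/existsP; exists u; rewrite vu cu andbT; apply: contra uF2; apply/subsetP.
Qed.

End Colourings.

Section Rainbow.

Variables (T : finType) (e : rel T).
Hypotheses (e_sym : symmetric e) (T_gt0 : 0 < #|T|).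

Lemma chi_leq_drop_colour k (c : {ffun T -> 'I_k}) (m : 'I_k) :
  proper e c ->
  (forall v, c v = m -> exists2 j, j != m & forall u, inN e v u -> c u != j) ->
  chi e <= k.-1.
Proof.
move=> /properP pc miss.
have /fin_all_exists [j jP] : forall v, exists j : 'I_k,
    c v = m -> j != m /\ forall u, inN e v u -> c u != j.
  move=> v; case: (c v =P m) => [cv|ncv]; last by exists m => /ncv.
  by have [j ? ?] := miss v cv; exists j.
rewrite -(card_ord k) -(cardsC1 m).
apply: (@chi_leq_card _ _ _ (fun v => if c v == m then j v else c v)) => // [v|x y exy].
  by rewrite in_setC1; have [/jP []|] := eqVneq (c v) m.
have inN_edge u v : e u v -> inN e u v by move=> euv; rewrite /inN euv orbT.
have [cx|ncx] := eqVneq (c x) m; have [cy|ncy] := eqVneq (c y) m.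
- by move: (pc x y exy); rewrite cx cy eqxx.
- by rewrite eq_sym; apply: (jP x cx).2; apply: inN_edge.
- by apply: (jP y cy).2; rewrite inN_edge // e_sym.
- exact: pc.
Qed.

Lemma rainbow_exists (c : {ffun T -> 'I_(chi e)}) :
  proper e c -> exists v, rainbow e c set0 v.
Proof.
move=> pc; apply/existsP; apply: contraT => /existsPn no_rainbow.
have [x0 _] := card_gt0P T_gt0.
have: chi e <= (chi e).-1.
  apply: (@chi_leq_drop_colour _ c (c x0) pc) => v cv.
  have /forallPn [j /existsPn no_j] := no_rainbow v.
  exists j => [|u vu]; last by have := no_j u; rewrite vu in_set0.
  by apply: contra (no_j v) => /eqP jm; rewrite /inN eqxx in_set0 cv jm eqxx.
by have := ltn_ord (c x0); lia.
Qed.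

Lemma rnum_gt0 (c : {ffun T -> 'I_(chi e)}) : proper e c -> 0 < rnum e c.
Proof. by move=> /rainbow_exists [v rb_v]; apply/card_gt0P; exists v; rewrite inE. Qed.

End Rainbow.

Definition fade_max (T : finType) (e : rel T) k (c : {ffun T -> 'I_k}) R : nat :=
  \max_(F : {set T} | rcount e c F == R) #|F|.

Definition fading (T : finType) (e : rel T) k R : nat :=
  \max_(c : {ffun T -> 'I_k} | proper e c && (rnum e c == R)) fade_max e c R.

Definition rnum_min (T : finType) (e : rel T) k : nat :=
  \big[minn/#|T|]_(c : {ffun T -> 'I_k} | proper e c) rnum e c.

Definition rnum_max (T : finType) (e : rel T) k : nat :=
  \max_(c : {ffun T -> 'I_k} | proper e c) rnum e c.

Lemma fminusE (T : finType) (e : rel T) : fminus e = fading e (chi e) (rminus e).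
Proof. by []. Qed.

Lemma fplusE (T : finType) (e : rel T) : fplus e = fading e (chi e) (rplus e).
Proof. by []. Qed.

Section Join.

Variables (T : finType) (e : rel T) (t : nat).
Hypotheses (e_sym : symmetric e) (e_irr : irreflexive e) (T_gt0 : 0 < #|T|).
Hypothesis t_gt0 : 0 < t.

Local Notation eJ := (join_rel t e).

Definition join_colouring k (a : 'I_k.+1) (cG : {ffun T -> 'I_k}) :
  {ffun 'I_t + T -> 'I_k.+1} :=
  [ffun u => if u is inr x then lift a (cG x) else a].

Lemma proper_join_colouring k (a : 'I_k.+1) (cG : {ffun T -> 'I_k}) :
  proper eJ (join_colouring a cG) = proper e cG.
Proof.
apply/properP/properP => pc.
  by move=> x y exy; have := pc (inr x) (inr y) exy; rewrite !ffunE (inj_eq lift_inj).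
move=> [i|x] [j|y] //= exy; rewrite !ffunE ?(inj_eq lift_inj) ?pc //.
  exact: neq_lift.
by rewrite eq_sym neq_lift.
Qed.

Lemma chi_join : chi eJ = (chi e).+1.
Proof.
apply/anti_leq/andP; split.
  have [cG pG] := chi_exists e_irr.
  by apply: (@chi_leq _ _ _ (join_colouring ord_max cG)); rewrite proper_join_colouring.
have irrJ : irreflexive eJ by case=> // x; apply: e_irr.
have [d /properP pd] := chi_exists irrJ; pose a := d (inl (Ordinal t_gt0)).
have: chi e <= (chi eJ).-1.
  rewrite -(card_ord (chi eJ)) -(cardsC1 a).
  apply: (@chi_leq_card _ e _ (fun x => d (inr x))) => // [x|x y exy].
    by rewrite in_setC1 eq_sym pd.
  exact: (pd (inr x) (inr y)).
by have := ltn_ord a; lia.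
Qed.

Lemma join_colouringP (c : {ffun 'I_t + T -> 'I_(chi e).+1}) :
  proper eJ c -> exists a cG, proper e cG /\ c = join_colouring a cG.
Proof.
move=> pc; suff [a [cG def_c]] : exists a cG, c = join_colouring a cG.
  by exists a, cG; rewrite -(proper_join_colouring a) -def_c.
move/properP: pc => pc; pose a := c (inl (Ordinal t_gt0)).
have a_notG x : c (inr x) != a by rewrite eq_sym; apply: pc.
have c_inl i : c (inl i) = a.
  apply/eqP; apply: contraT => ne.
  have: chi e <= #|~: [set a; c (inl i)]|.
    apply: (@chi_leq_card _ e _ (fun x => c (inr x))) => // [x|x y exy].
      by rewrite !inE negb_or a_notG; apply: pc.
    exact: (pc (inr x) (inr y)).
  by have := cardsC [set a; c (inl i)]; rewrite cards2 eq_sym ne card_ord; lia.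
have /fin_all_exists [cG cGP] : forall x, exists j, c (inr x) = lift a j.
  move=> x; case: (unliftP a (c (inr x))) (a_notG x) => [j ->|->]; last by rewrite eqxx.
  by exists j.
by exists a, [ffun x => cG x]; apply/ffunP => -[i|x]; rewrite !ffunE.
Qed.

Section FixedColouring.

Variables (k : nat) (a : 'I_k.+1) (cG : {ffun T -> 'I_k}).
Local Notation cJ := (join_colouring a cG).

Lemma inN_join_inr x y : inN eJ (inr x) (inr y) = inN e x y.
Proof. by []. Qed.

Lemma rainbow_join_inr (F : {set _}) x :
  rainbow eJ cJ F (inr x) =
  [exists i, inl i \notin F] && rainbow e cG (inr @^-1: F) x.
Proof.
apply/idP/andP => [/forallP rb|[/existsP [i iF] /forallP rb]].
  split.
    have /existsP [[i|y] /and3P [_ uF cu]] := rb a; first by apply/existsP; exists i.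
    by rewrite ffunE eq_sym (negbTE (neq_lift _ _)) in cu.
  apply/forallP => j; have /existsP [[i|y] /and3P [xu uF cu]] := rb (lift a j).
    by rewrite ffunE (negbTE (neq_lift _ _)) in cu.
  rewrite ffunE (inj_eq lift_inj) in cu.
  by apply/existsP; exists y; rewrite inE -inN_join_inr xu uF.
apply/forallP => j; case: (unliftP a j) => [j' ->|->].
  have /existsP [y /and3P [xy yF cy]] := rb j'.
  rewrite inE in yF.
  by apply/existsP; exists (inr y); rewrite ffunE (eqP cy) eqxx inN_join_inr xy yF.
by apply/existsP; exists (inl i); rewrite ffunE eqxx iF.
Qed.

Lemma rainbow_join_inl_unfaded (F : {set _}) i :
  rainbow eJ cJ F (inl i) -> inl i \notin F.
Proof.
move/forallP/(_ a)/existsP => [[i'|y] /and3P [iu uF cu]].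
  by move: iu; rewrite /inN /= orbF => /eqP <-.
by rewrite ffunE eq_sym (negbTE (neq_lift _ _)) in cu.
Qed.

Lemma rainbow_join_inl (F : {set _}) i x :
  rainbow e cG (inr @^-1: F) x -> inl i \notin F -> rainbow eJ cJ F (inl i).
Proof.
move=> /forallP rb iF; apply/forallP => j; case: (unliftP a j) => [j' ->|->].
  have /existsP [y /and3P [_ yF cy]] := rb j'; rewrite inE in yF.
  by apply/existsP; exists (inr y); rewrite ffunE (eqP cy) eqxx yF.
by apply/existsP; exists (inl i); rewrite ffunE eqxx iF /inN eqxx.
Qed.

Lemma rcount_join_le (F : {set _}) :
  rcount eJ cJ F <= #|~: inl @^-1: F| + rcount e cG (inr @^-1: F).
Proof.
rewrite /rcount card_preim_sum; apply: leq_add; apply/subset_leq_card/subsetP => u.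
  by rewrite !inE; apply: rainbow_join_inl_unfaded.
by rewrite !inE rainbow_join_inr => /andP [].
Qed.

Lemma rcount_join (F : {set _}) :
  inl @^-1: F = set0 -> 0 < rcount e cG (inr @^-1: F) ->
  rcount eJ cJ F = t + rcount e cG (inr @^-1: F).
Proof.
move=> /setP F_inl /card_gt0P [x]; rewrite inE => rb_x.
have inl_notF i : inl i \notin F by have := F_inl i; rewrite !inE => ->.
rewrite /rcount card_preim_sum; congr (_ + _).
  rewrite -[t in RHS]card_ord -cardsT; apply: eq_card => i.
  by rewrite !inE (rainbow_join_inl rb_x).
apply: eq_card => y; rewrite !inE rainbow_join_inr andb_idl //.
by move=> _; apply/existsP; exists (Ordinal t_gt0).
Qed.

Lemma rcount_join_imset (F : {set T}) :
  0 < rcount e cG F -> rcount eJ cJ (inr @: F) = t + rcount e cG F.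
Proof.
move=> rcF_gt0; rewrite rcount_join ?preimset_imset_inj ?preimset_inl_imset_inr //;
  exact: inr_inj.
Qed.

Hypothesis rnum_cG_gt0 : 0 < rnum e cG.

Lemma rnum_join : rnum eJ cJ = rnum e cG + t.
Proof. by rewrite /rnum rcount_join ?preimset0 // addnC. Qed.

Lemma fade_max_join : fade_max eJ cJ (rnum e cG + t) = fade_max e cG (rnum e cG).
Proof.
apply/anti_leq/andP; split; apply: bigmax_leq_majorized => F /eqP rcF.
  have le_sum := rcount_join_le F; rewrite rcF /rnum in le_sum.
  have le_rG := rcount_antimono e cG (sub0set (inr @^-1: F)).
  have := cardsC (inl @^-1: F); rewrite card_ord => partF.
  have F_inl : inl @^-1: F = set0 by apply: cards0_eq; lia.
  exists (inr @^-1: F); first by rewrite /rnum; apply/eqP; lia.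
  by rewrite (card_preim_sum F) F_inl cards0.
exists (inr @: F); last by rewrite card_imset //; apply: inr_inj.
by rewrite rcount_join_imset rcF // addnC.
Qed.

End FixedColouring.

Lemma rnum_join_proper a (cG : {ffun T -> 'I_(chi e)}) :
  proper e cG -> rnum eJ (join_colouring a cG) = rnum e cG + t.
Proof. by move=> pG; apply/rnum_join/rnum_gt0. Qed.

Lemma rminus_join : rminus eJ = rminus e + t.
Proof.
have -> : rminus eJ = rnum_min eJ (chi e).+1 by rewrite -chi_join.
rewrite /rnum_min card_sum card_ord addnC.
apply: bigmin_shift => [cG pG | c /join_colouringP [a [cG [pG ->]]]].
  by exists (join_colouring ord_max cG); rewrite ?proper_join_colouring ?rnum_join_proper.
by exists cG; rewrite ?rnum_join_proper.
Qed.

Lemma rplus_join : rplus eJ = rplus e + t.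
Proof.
have -> : rplus eJ = rnum_max eJ (chi e).+1 by rewrite -chi_join.
apply: bigmax_shift => [cG pG | c /join_colouringP [a [cG [pG ->]]] |].
- by exists (join_colouring ord_max cG); rewrite ?proper_join_colouring ?rnum_join_proper.
- by exists cG; rewrite ?rnum_join_proper.
- exact: chi_exists.
Qed.

Lemma fading_join R : fading eJ (chi e).+1 (R + t) = fading e (chi e) R.
Proof.
apply/anti_leq/andP; split; apply: bigmax_leq_majorized.
  move=> _ /andP [/join_colouringP [a [cG [pG ->]]] /eqP].
  rewrite rnum_join_proper // => /addIn rG; exists cG; first by rewrite pG rG eqxx.
  by rewrite -rG fade_max_join // rnum_gt0.
move=> cG /andP [pG /eqP rG]; exists (join_colouring ord_max cG).
  by rewrite proper_join_colouring pG rnum_join_proper // rG eqxx.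
by rewrite -rG fade_max_join // rnum_gt0.
Qed.

End Join.

Theorem mainTheorem9 (T : finType) (e : rel T) (t : nat) :
  simple_connected_graph e -> 1 <= t ->
  fminus (join_rel t e) = fminus e /\ fplus (join_rel t e) = fplus e.
Proof.
move=> [e_sym e_irr T_gt0 _] t_gt0.
rewrite !fminusE !fplusE chi_join // rminus_join // rplus_join //.
by rewrite !fading_join.
Qed.
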